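(* Let $n\ge1$, $K=U(n)$, $\underline{\lambda}=(\lambda_1\ge\dots\ge\lambda_{n+1})$, $\underline{\mu}=(\mu_1\ge\dots\ge\mu_n)$ with $\lambda_1\ge\mu_1\ge\lambda_2\ge\dots\ge\mu_n\ge\lambda_{n+1}$, $m=m(\underline{\mu})$, and let $\tilde p\in\mathcal{O}_\Lambda$, $V=\bigoplus V_i$-projections $V_i,U_i$ and $L_i$ be as in the context. Then for every $i=1,\dots,m$ there is an isomorphism of $L_i$-representations $$V_i/U_i\cong\begin{cases}\mathbb{C}^{n_i(\underline{\mu})} & \text{if the component labelled }\underline{\mu}_i\text{ is a parallelogram-shape},\\ \{0\}&\text{otherwise},\end{cases}$$ where $\mathbb{C}^{n_i(\underline{\mu})}$ is the standard representation of $U(n_i(\underline{\mu}))=L_i$.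
   Context: Notation: for a finite real sequence $\underline{\tau}$, $[\underline{\tau}]$ is its set of distinct values, $\underline{\tau}_i$ the $i$-th element of $[\underline{\tau}]$ in decreasing order, $m(\underline{\tau})=|[\underline{\tau}]|$, $n_v(\underline{\tau})$ the multiplicity of $v$, $n_i(\underline{\tau})=n_{\underline{\tau}_i}(\underline{\tau})$. Shapes: for each value $v$ in $\underline{\lambda}$ or $\underline{\mu}$, the component labelled $v$ is an M-shape if $n_v(\underline{\mu})=n_v(\underline{\lambda})+1$, a W-shape if $n_v(\underline{\lambda})=n_v(\underline{\mu})+1$, a parallelogram-shape if $n_v(\underline{\lambda})=n_v(\underline{\mu})$. For $\mu\in[\underline{\mu}]$ with M-shape component, $r_\mu>0$ with $r_\mu^2=-\prod_{\lambda\in[\underline{\lambda}],\,\text{W}}(\mu-\lambda)\prod_{\tau\in[\underline{\mu}],\,\text{M},\,\tau\neq\mu}\frac{1}{\mu-\tau}$; otherwise $r_\mu=0$. Setting: $\mathcal{O}_\Lambda$ is the set of $(n+1)\times(n+1)$ Hermitian matrices with eigenvalues $\lambda_1,\dots,\lambda_{n+1}$, with symplectic form $(\omega_\Lambda)_p([X,p],[Y,p])=\frac{1}{\sqrt{-1}}\mathrm{Tr}(p[X,Y])$, $X,Y\in\mathfrak{u}(n+1)$; $K$ acts by conjugation by $\mathrm{diag}(1,k)$. $\mathrm{M}=\mathrm{diag}(\mu_1,\dots,\mu_n)$, $c=\sum\lambda_i-\sum\mu_i$. Split $\mathbb{C}^n=\bigoplus_{i=1}^m\mathbb{C}^{n_i(\underline{\mu})}$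 according to the blocks of equal consecutive $\mu_j$; $\mathbf{v}_i$ denotes the $i$-th block of $\mathbf{v}\in\mathbb{C}^n$. $\tilde p=\begin{pmatrix}c&\mathbf{z}^\dagger\\ \mathbf{z}&\mathrm{M}\end{pmatrix}$ where $\mathbf{z}_i=(r_{\underline{\mu}_i},0,\dots,0)^T$ for each $i$; then $\tilde p\in\mathcal{O}_\Lambda$. Let $T\colon T_{\tilde p}(K\cdot\tilde p)^\omega\to\mathbb{C}^n$ send a tangent vector (which is a Hermitian matrix of the form $\begin{pmatrix}0&\mathbf{v}^\dagger\\ \mathbf{v}&0\end{pmatrix}$) to its lower-left block $\mathbf{v}$; here $T_{\tilde p}(K\cdot\tilde p)^\omega$ is the $\omega_\Lambda$-orthogonal complement of the tangent space of the $K$-orbit. Let $V=T(T_{\tilde p}(K\cdot\tilde p)^\omega)$, $U=T(T_{\tilde p}(K\cdot\tilde p)\cap T_{\tilde p}(K\cdot\tilde p)^\omega)$, and let $V_i,U_i\subset\mathbb{C}^{n_i(\underline{\mu})}$ be the projections of $V,U$ onto the $i$-th block, so $U_i\subseteq V_i$. The isotropy group $K_{\tilde p}$ is the block-diagonal group $L_1\times\dots\times L_m$ with $L_i=\{\mathrm{diag}(1,k):k\in U(n_i(\underline{\mu})-1)\}\le U(n_i(\underline{\mu}))$ if the component labelled $\underline{\mu}_i$ is an M-shape and $L_i=U(n_i(\underline{\mu}))$ otherwise; $L_i$ acts on $\mathbb{C}^{n_i(\underline{\mu})}$ via $L_i\subseteq U(n_i(\underline{\mu}))$, preserving $U_i\subseteq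 V_i$, hence acts on $V_i/U_i$. *)

From HB Require Import structures.
From mathcomp Require Import all_boot all_order all_algebra.
From mathcomp Require Import complex.
Set Implicit Arguments. Unset Strict Implicit. Unset Printing Implicit Defensive.
Import Order.TTheory GRing.Theory Num.Theory.
Local Open Scope ring_scope.

Section Defs.
Variable R : rcfType.
Local Notation C := (R[i]).

Definition toC (x : R) : C := Complex x 0.
Definition imag_unit : C := Complex 0 1.

Definition dvals (k : nat) (f : 'I_k -> R) : seq R :=
  sort (fun x y => y <= x) (undup [seq f j | j <- enum 'I_k]).

Definition mval (k : nat) (f : 'I_k -> R) (v : R) : nat :=
  #|[pred j : 'I_k | f j == v]|.

(* m(mu), mu_i (0-based), n_i(mu) *)
Definition mblocks (n : nat) (mu : 'I_n -> R) : nat := size (dvals mu).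
Definition blockval (n : nat) (mu : 'I_n -> R) (i : nat) : R := nth 0 (dvals mu) i.
Definition blocksize (n : nat) (mu : 'I_n -> R) (i : nat) : nat :=
  mval mu (blockval mu i).
(* position (0-based) of the first index of block i in 1..n, mu being
   non-increasing *)
Definition blockstart (n : nat) (mu : 'I_n -> R) (i : nat) : nat :=
  #|[pred j : 'I_n | blockval mu i < mu j]|.

Section Shapes.
Variables (n : nat) (lam : 'I_n.+1 -> R) (mu : 'I_n -> R).

Definition isMshape (v : R) : bool := mval mu v == (mval lam v).+1.
Definition isWshape (v : R) : bool := mval lam v == (mval mu v).+1.
Definition isPshape (v : R) : bool := mval lam v == mval mu v.

Definition rsq (v : R) : R :=
  - (\prod_(l <- dvals lam | isWshape l) (v - l)) *
    \prod_(t <- dvals mu | isMshape t && (t != v)) (v - t)^-1.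

Definition rval (v : R) : R := if isMshape v then Num.sqrt (rsq v) else 0.

Definition cconst : R := \sum_(j < n.+1) lam j - \sum_(j < n) mu j.

(* z : the i-th block of z is (r_{mu_i}, 0, ..., 0) *)
Definition zvec (j : 'I_n) : C :=
  if [forall k : 'I_n, (k < j)%N ==> (mu k != mu j)]
  then toC (rval (mu j)) else 0.

(* p~ = [[c, z^dagger], [z, M]] *)
Definition ptilde : 'M[C]_n.+1 := \matrix_(a, b)
  match unlift ord0 a, unlift ord0 b with
  | None, None => toC cconst
  | None, Some k => conjc (zvec k)
  | Some j, None => zvec j
  | Some j, Some k => if j == k then toC (mu j) else 0
  end.
End Shapes.

Definition adjmx (d : nat) (A : 'M[C]_d) : 'M[C]_d := (map_mx (@conjc R) A)^T.
Definition skewH (d : nat) (X : 'M[C]_d) : Prop := adjmx X = - X.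
Definition unitaryM (d : nat) (g : 'M[C]_d) : Prop := g *m adjmx g = 1%:M.
Definition lie (d : nat) (X Y : 'M[C]_d) : 'M[C]_d := X *m Y - Y *m X.

(* diag(0, Y) : the infinitesimal action of K = U(n) via diag(1,k) *)
Definition diag0 (n : nat) (Y : 'M[C]_n) : 'M[C]_n.+1 := \matrix_(a, b)
  match unlift ord0 a, unlift ord0 b with
  | Some j, Some k => Y j k
  | _, _ => 0
  end.

Definition omegaKKS (d : nat) (p X Y : 'M[C]_d) : C :=
  imag_unit^-1 * \tr (p *m lie X Y).

Section Tangent.
Variables (n : nat) (p : 'M[C]_n.+1).

Definition TK (xi : 'M[C]_n.+1) : Prop :=
  exists Y : 'M[C]_n, skewH Y /\ xi = lie (diag0 Y) p.

(* T_p(K.p)^omega, inside T_p O = { [X,p] : X in u(n+1) } *)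
Definition TKomega (xi : 'M[C]_n.+1) : Prop :=
  exists X : 'M[C]_n.+1, [/\ skewH X, xi = lie X p &
    forall Y : 'M[C]_n, skewH Y -> omegaKKS p X (diag0 Y) = 0].

Definition Tmap (xi : 'M[C]_n.+1) : 'cV[C]_n := \col_j xi (lift ord0 j) ord0.

Definition Vsp (v : 'cV[C]_n) : Prop := exists2 xi, TKomega xi & Tmap xi = v.
Definition Usp (v : 'cV[C]_n) : Prop :=
  exists xi, [/\ TK xi, TKomega xi & Tmap xi = v].
End Tangent.

Section Blocks.
Variables (n : nat) (lam : 'I_n.+1 -> R) (mu : 'I_n -> R) (i : nat).

Definition projblock (v : 'cV[C]_n) : 'cV[C]_(blocksize mu i) :=
  \col_k nth 0 [seq v j ord0 | j <- enum 'I_n] (blockstart mu i + k).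

Definition Vblock (w : 'cV[C]_(blocksize mu i)) : Prop :=
  exists2 v, Vsp (ptilde lam mu) v & projblock v = w.
Definition Ublock (w : 'cV[C]_(blocksize mu i)) : Prop :=
  exists2 v, Usp (ptilde lam mu) v & projblock v = w.

(* L_i : diag(1, U(n_i - 1)) for an M-shape, U(n_i) otherwise *)
Definition Lgrp (g : 'M[C]_(blocksize mu i)) : Prop :=
  unitaryM g /\
  (isMshape lam mu (blockval mu i) ->
     forall a b : 'I_(blocksize mu i),
       (val a == 0)%N || (val b == 0)%N ->
       g a b = (if val a == val b then 1 else 0)).
End Blocks.

(* V/U is isomorphic, as a (real) L-representation, to the standard
   representation C^d of L <= U(d): there is a real-linear L-equivariant map
   from V onto C^d whose kernel is exactly U. *)
Definition quot_iso_std (d : nat) (V U : 'cV[C]_d -> Prop) (L : 'M[C]_d -> Prop)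
  : Prop :=
  exists f : 'cV[C]_d -> 'cV[C]_d,
    [/\ (forall (a : R) v w, V v -> V w -> f (toC a *: v + w) = toC a *: f v + f w),
        (forall y, exists2 v, V v & f v = y),
        (forall v, V v -> (f v = 0 <-> U v)) &
        (forall g v, L g -> V v -> f (g *m v) = g *m f v)].

Definition quot_trivial (d : nat) (V U : 'cV[C]_d -> Prop) : Prop :=
  forall v, V v -> U v.

End Defs.
Arguments Vblock {R n} lam mu i w.
Arguments Ublock {R n} lam mu i w.
Arguments Lgrp {R n} lam mu i g.

(* Let z be the column of p~ below its corner (z_j = r_v at the first index j of
   the block of value v, and 0 elsewhere) and
   kappa(v) = c - v + sum_{t M-shaped} r_t^2 / (v - t).
   A tangent vector [X, p~] is omega-orthogonal to the K-orbit iff its lower-right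
   n x n block vanishes.  Solving these equations off the diagonal blocks shows that
   on a block where z vanishes (P- and W-shapes) the lower-left entries of [X, p~]
   are X_j0 kappa(v), while U has no component there.  Interlacing forces
   #W = #M + 1 and c = sum W - sum M, which is exactly what makes
   - prod_W (x - l) / prod_M (x - t) = c - x + sum_t r_t^2 / (x - t)
   a partial fraction decomposition; hence kappa vanishes precisely at the W-shaped
   values, so V_i is all of C^{n_i} for a P-shape and 0 for a W-shape.  On an
   M-shaped block, z is supported on its first index f with z_f = r_v > 0, and
   every element of V_i is realised by a skew-Hermitian matrix supported on row and
   column f of the block, so V_i = U_i. *)

From HB Require Import structures.
From mathcomp Require Import all_boot all_order all_algebra.
From mathcomp Require Import complex.
From mathcomp Require Import zify ring lra.
Import Order.TTheory GRing.Theory Num.Theory.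
Local Open Scope ring_scope.
Set Implicit Arguments. Unset Strict Implicit. Unset Printing Implicit Defensive.

(* Lets [/=] fold ring-morphism applications back to [conjc] without computing
   [conjc] on explicit complex numbers. *)
Arguments conjc : simpl never.

Lemma card_ord_ltn (m k : nat) : #|[pred i : 'I_m | (i < k)%N]| = minn k m.
Proof.
rewrite cardE /enum_mem -enumT /= size_filter -(count_map val (fun i => i < k)%N).
rewrite val_enum_ord; elim: m => [|m IHm]; first by rewrite minn0.
by rewrite -addn1 iotaD count_cat IHm /=; case: (ltnP m k); lia.
Qed.

Lemma downclosed_mem_card (m : nat) (A : pred 'I_m) :
  (forall i j : 'I_m, (i <= j)%N -> A j -> A i) ->
  forall j : 'I_m, A j = (j < #|A|)%N.
Proof.
move=> Adown j; apply/idP/idP => [Aj | ltjA].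
  have: (#|[pred i : 'I_m | (i < j.+1)%N]| <= #|A|)%N.
    by apply/subset_leq_card/subsetP => i; rewrite inE /= => lei; apply: Adown Aj.
  by rewrite card_ord_ltn (minn_idPl (ltn_ord j)).
apply/negPn/negP => nAj.
have: (#|A| <= #|[pred i : 'I_m | (i < j)%N]|)%N.
  apply/subset_leq_card/subsetP => i Ai; rewrite inE /= ltnNge.
  by apply/negP => leji; move: nAj; rewrite (Adown j i leji Ai).
by rewrite card_ord_ltn; have := ltn_ord j; lia.
Qed.

Lemma nonincreasing_ord_step (d : Order.disp_t) (T : porderType d) (m : nat)
    (f : 'I_m -> T) :
  (forall a b : 'I_m, val b = (val a).+1 -> (f b <= f a)%O) ->
  forall i j : 'I_m, (i <= j)%N -> (f j <= f i)%O.
Proof.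
move=> fstep i j leij; have [d' eqj] : exists d', j = (i + d')%N :> nat.
  by exists (j - i)%N; lia.
elim: d' j eqj {leij} => [|d' IHd'] j eqj.
  by rewrite (_ : j = i) //; apply: val_inj; rewrite /= eqj addn0.
have lt_id : (i + d' < m)%N by have := ltn_ord j; lia.
apply: le_trans (IHd' (Ordinal lt_id) erefl).
by apply: fstep; rewrite /= eqj addnS.
Qed.

Lemma count_index_enum (T : finType) (P : pred T) :
  count P (index_enum T) = #|[pred x | P x]|.
Proof. by rewrite cardE size_filter. Qed.

Section SumByValues.
Variables (T : eqType) (V : nmodType) (k : nat) (f : 'I_k -> T) (s : seq T).
Hypotheses (s_uniq : uniq s) (f_in_s : forall j, f j \in s).

Lemma sum_by_fibers (H : 'I_k -> V) :
  \sum_j H j = \sum_(u <- s) \sum_(j | f j == u) H j.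
Proof.
transitivity (\sum_j \sum_(u <- s | u == f j) H j).
  by apply: eq_bigr => j _; rewrite -big_filter filter_pred1_uniq // big_seq1.
rewrite (exchange_big_dep predT) //=; apply: eq_bigr => u _.
by apply: eq_bigl => j; rewrite eq_sym.
Qed.

Lemma sum_by_values (F : T -> V) :
  \sum_j F (f j) = \sum_(u <- s) F u *+ #|[pred j | f j == u]|.
Proof.
rewrite sum_by_fibers; apply: eq_bigr => u _; rewrite -sumr_const.
by apply: eq_big => [j|j /eqP ->]; rewrite ?inE.
Qed.
End SumByValues.

Lemma sum_filter_mulrn (T : Type) (V : nmodType) (s : seq T) (P : pred T) (F : T -> V) :
  \sum_(u <- [seq u <- s | P u]) F u = \sum_(u <- s) F u *+ P u.
Proof. by rewrite big_filter big_mkcond; apply: eq_bigr => u _; case: (P u). Qed.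

Lemma prod_sub_sign (R : realDomainType) (s : seq R) (v : R) : v \notin s ->
  0 < (-1) ^+ count (fun l => v < l) s * \prod_(l <- s) (v - l).
Proof.
elim: s => [|a s IHs] /=; first by rewrite big_nil mulr1 ltr01.
rewrite inE negb_or big_cons => /andP[neq_va /IHs]; set P := _ * _ => P_gt0.
case: (ltgtP v a) neq_va => [lt_va|lt_av|//] _ /=.
  rewrite exprS (_ : _ * _ = P * (a - v)); first by rewrite mulr_gt0 ?subr_gt0.
  by rewrite /P; ring.
rewrite (_ : _ * _ = P * (v - a)); first by rewrite mulr_gt0 ?subr_gt0.
by rewrite /P; ring.
Qed.

Lemma eq_poly_on (F : idomainType) (p q : {poly F}) (s : seq F) : uniq s ->
  (size p <= size s)%N -> (size q <= size s)%N -> {in s, forall x, p.[x] = q.[x]} -> p = q.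
Proof.
move=> s_uniq size_p size_q eq_pq; apply/eqP; rewrite -subr_eq0; apply/negPn/negP => pq_neq0.
have /max_poly_roots/(_ s_uniq) : all (root (p - q)) s.
  by apply/allP => x xs; rewrite rootE hornerD hornerN eq_pq // subrr.
move/(_ pq_neq0); apply/negP; rewrite -leqNgt.
by apply: leq_trans (size_polyD _ _) _; rewrite size_polyN geq_max size_p size_q.
Qed.

Lemma size_sub_monic_leq (F : nzRingType) (p q : {poly F}) (m : nat) :
  p \is monic -> q \is monic -> size p = m.+2 -> size q = m.+2 ->
  p`_m = q`_m -> (size (p - q)%R <= m)%N.
Proof.
move=> /monicP lead_p /monicP lead_q size_p size_q eq_m.
apply/leq_sizeP => i le_mi; rewrite coefB; apply/eqP; rewrite subr_eq0; apply/eqP.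
case: (ltngtP i m.+1) => [lt_im|lt_mi|->]; first by rewrite (_ : i = m) //; lia.
  by rewrite !nth_default ?size_p ?size_q.
by move: lead_p lead_q; rewrite !lead_coefE size_p size_q => -> ->.
Qed.

Section Complex.
Variable R : rcfType.
Local Notation C := R[i].

HB.instance Definition _ := GRing.RMorphism.copy (@toC R) (real_complex R).

Lemma conjc_toC (x : R) : conjc (toC x) = toC x.
Proof. exact: conjc_real. Qed.

Lemma toC_subr_eq0 (x y : R) : (toC x - toC y == 0) = (x == y).
Proof. by rewrite -rmorphB fmorph_eq0 subr_eq0. Qed.

Lemma conjc_imag_unit : conjc (imag_unit R) = - imag_unit R.
Proof. by rewrite /imag_unit /conjc; apply/eqP; rewrite eq_complex /= oppr0 !eqxx. Qed.

Lemma imag_unit_neq0 : imag_unit R != 0.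
Proof. by rewrite eq_complex /= oner_eq0 andbF. Qed.

Definition imaginary : {pred C} := [pred x | conjc x == - x].

Lemma imaginaryE x : (x \in imaginary) = (conjc x == - x). Proof. by []. Qed.

Fact imaginary_zmod_closed : zmod_closed imaginary.
Proof.
hnf; split=> [|x y]; rewrite !imaginaryE ?rmorph0 ?oppr0 // => /eqP xI /eqP yI.
by rewrite rmorphB /= xI yI opprD.
Qed.

HB.instance Definition _ := GRing.isZmodClosed.Build C imaginary
  imaginary_zmod_closed.

Lemma imaginaryMr (a : R) x : x \in imaginary -> x * toC a \in imaginary.
Proof. by rewrite !imaginaryE rmorphM /= conjc_toC => /eqP->; rewrite mulNr. Qed.

Lemma imaginaryMl (a : R) x : x \in imaginary -> toC a * x \in imaginary.
Proof. by rewrite mulrC; apply: imaginaryMr. Qed.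

Lemma imaginaryJ x : x \in imaginary -> conjc x \in imaginary.
Proof. by rewrite !imaginaryE conjcK => /eqP->; rewrite opprK. Qed.

Lemma imaginary_addJ x : (x + conjc x == 0) = (x \in imaginary).
Proof. by rewrite imaginaryE addr_eq0 eq_sym eqr_oppLR. Qed.
End Complex.
Arguments imaginary {R}.

Section SkewHermitian.
Variables (R : rcfType) (d : nat).
Local Notation C := R[i].

Lemma adjmxE (A : 'M[C]_d) a b : adjmx A a b = conjc (A b a).
Proof. by rewrite !mxE. Qed.

Lemma skewHE (Y : 'M[C]_d) : skewH Y -> forall a b, conjc (Y b a) = - Y a b.
Proof. by move=> skewY a b; rewrite -adjmxE skewY mxE. Qed.

Lemma skewH_entry (Y : 'M[C]_d) : skewH Y -> forall a b, Y a b = - conjc (Y b a).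
Proof. by move=> skewY a b; apply: oppr_inj; rewrite opprK (skewHE skewY). Qed.

Lemma skewH0 : skewH (0 : 'M[C]_d).
Proof. by apply/matrixP => a b; rewrite adjmxE !mxE rmorph0 oppr0. Qed.

Lemma skewH_delta (r s : 'I_d) : skewH (delta_mx r s - delta_mx s r : 'M[C]_d).
Proof.
apply/matrixP => a b; rewrite adjmxE !mxE rmorphB /= !conjc_nat opprB.
by rewrite [(a == r) && _]andbC [(a == s) && _]andbC.
Qed.

Lemma skewH_idelta (r s : 'I_d) :
  skewH (imag_unit R *: (delta_mx r s + delta_mx s r) : 'M[C]_d).
Proof.
apply/matrixP => a b; rewrite adjmxE !mxE rmorphM rmorphD /= !conjc_nat conjc_imag_unit.
by rewrite [(a == r) && _]andbC [(a == s) && _]andbC mulNr addrC.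
Qed.

Lemma mxtrace_mul_delta (F : 'M[C]_d) (r s : 'I_d) : \tr (F *m delta_mx r s) = F s r.
Proof.
rewrite /mxtrace (bigD1 s) //= big1 => [|a neq_as]; last first.
  by rewrite mxE big1 // => b _; rewrite mxE (negbTE neq_as) andbF mulr0.
rewrite mxE (bigD1 r) //= big1 ?addr0 => [|b neq_br]; rewrite mxE ?eqxx ?mulr1 //.
by rewrite (negbTE neq_br) mulr0.
Qed.

Lemma skewH_trace_eq0 (F : 'M[C]_d) :
  (forall Y, skewH Y -> \tr (F *m Y) = 0) -> F = 0.
Proof.
move=> trFY; apply/matrixP => j k; rewrite mxE.
have := trFY _ (skewH_delta k j); have := trFY _ (skewH_idelta k j).
rewrite -scalemxAr mxtraceZ !mulmxDr mulmxN !mxtraceD raddfN /= !mxtrace_mul_delta.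
move/eqP; rewrite mulf_eq0 (negbTE (imag_unit_neq0 R)) /= => /eqP sum_eq0 diff_eq0.
have : (F j k + F k j) + (F j k - F k j) = F j k *+ 2 by rewrite mulr2n; ring.
by rewrite sum_eq0 diff_eq0 addr0 => /esym/eqP; rewrite mulrn_eq0 => /eqP.
Qed.
End SkewHermitian.

Lemma card_ge_split (R : rcfType) (k : nat) (f : 'I_k -> R) (v : R) :
  #|[pred j | (v <= f j)%R]| = (#|[pred j | (v < f j)%R]| + mval f v)%N.
Proof.
rewrite /mval -(cardID [pred j | (v < f j)%R] [pred j | (v <= f j)%R]).
by congr (_ + _)%N; apply: eq_card => j; rewrite !inE /=; case: ltgtP.
Qed.

Lemma mval_gt0 (R : rcfType) (k : nat) (f : 'I_k -> R) (v : R) :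
  (0 < mval f v)%N = (v \in [seq f j | j <- enum 'I_k]).
Proof.
apply/card_gt0P/mapP => [[j /[!inE] /eqP <-]|[j _ ->]]; first by exists j; rewrite ?mem_enum.
by exists j; rewrite inE.
Qed.

Lemma mem_dvals (R : rcfType) (k : nat) (f : 'I_k -> R) (v : R) :
  (v \in dvals f) = (0 < mval f v)%N.
Proof. by rewrite mem_sort mem_undup mval_gt0. Qed.

Lemma dvals_uniq (R : rcfType) (k : nat) (f : 'I_k -> R) : uniq (dvals f).
Proof. by rewrite sort_uniq undup_uniq. Qed.

Section Interlacing.
Variables (R : rcfType) (n : nat) (lam : 'I_n.+1 -> R) (mu : 'I_n -> R).
Hypothesis interlacing : forall j : 'I_n,
  mu j <= lam (widen_ord (leqnSn n) j) /\ lam (lift ord0 j) <= mu j.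

Local Notation isM := (isMshape lam mu).
Local Notation isW := (isWshape lam mu).
Local Notation isP := (isPshape lam mu).
Local Notation c := (cconst lam mu).

Lemma mu_nonincreasing (i j : 'I_n) : (i <= j)%N -> mu j <= mu i.
Proof.
move: i j; apply: nonincreasing_ord_step => a b eq_b.
apply: le_trans (interlacing b).1 _.
have -> : widen_ord (leqnSn n) b = lift ord0 a by apply: val_inj; rewrite /= eq_b.
exact: (interlacing a).2.
Qed.

Lemma card_interlacing (P : pred R) : (forall x y, x <= y -> P x -> P y) ->
  (#|[pred j | P (mu j)]| <= #|[pred j | P (lam j)]| <= #|[pred j | P (mu j)]|.+1)%N.
Proof.
move=> Pup; apply/andP; split.
  have widen_inj : injective (widen_ord (leqnSn n)) by move=> a b [] /val_inj.
  rewrite -(card_imset _ widen_inj).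
  apply/subset_leq_card/subsetP => _ /imsetP[j Pj ->].
  by rewrite inE /=; apply: Pup (interlacing j).1 _.
apply: (@leq_trans #|ord0 |: [set lift ord0 j | j in [pred j | P (mu j)]]|).
  apply/subset_leq_card/subsetP => j; rewrite inE /= !inE.
  case: (unliftP ord0 j) => [k -> Pk|->]; last by rewrite eqxx.
  by apply/orP; right; apply/imsetP; exists k; rewrite // inE /= (Pup _ _ (interlacing k).2).
by rewrite cardsU1 card_imset; [case: (_ \notin _) | exact: lift_inj].
Qed.

Lemma interlacing_counts (v : R) :
  [/\ (#|[pred j | (v < mu j)%R]| <= #|[pred j | (v < lam j)%R]|)%N,
      (#|[pred j | (v < lam j)%R]| <= #|[pred j | (v < mu j)%R]|.+1)%N,
      (#|[pred j | (v < mu j)%R]| + mval mu v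
         <= #|[pred j | (v < lam j)%R]| + mval lam v)%N &
      (#|[pred j | (v < lam j)%R]| + mval lam v
         <= (#|[pred j | (v < mu j)%R]| + mval mu v).+1)%N].
Proof.
have /andP[lt1 lt2] := @card_interlacing (fun x => v < x)
  (fun x y lexy ltvx => lt_le_trans ltvx lexy).
have /andP[le1 le2] := @card_interlacing (fun x => v <= x)
  (fun x y lexy levx => le_trans levx lexy).
by move: le1 le2; rewrite !card_ge_split.
Qed.

Lemma shape_balance (v : R) : (mval lam v + isM v = mval mu v + isW v)%N.
Proof.
by have [] := interlacing_counts v; rewrite /isMshape /isWshape; do 2 case: eqP; lia.
Qed.

Lemma Mshape_card_gt (v : R) : isM v ->
  #|[pred j | (v < lam j)%R]| = #|[pred j | (v < mu j)%R]|.+1.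
Proof. by have [] := interlacing_counts v; rewrite /isMshape => ? ? ? ? /eqP; lia. Qed.

Lemma Mshape_notW (v : R) : isM v -> ~~ isW v.
Proof. by rewrite /isMshape /isWshape => /eqP->; apply/eqP; lia. Qed.

Lemma Wshape_notP_notM (v : R) : ~~ isP v -> ~~ isM v -> isW v.
Proof.
have [] := interlacing_counts v; rewrite /isMshape /isWshape /isPshape.
by do 3 case: eqP => //=; lia.
Qed.

Lemma Pshape_notM (v : R) : isP v -> ~~ isM v.
Proof. by rewrite /isPshape /isMshape => /eqP->; apply/eqP; lia. Qed.

Lemma Pshape_notW (v : R) : isP v -> ~~ isW v.
Proof. by rewrite /isPshape /isWshape => /eqP->; apply/eqP; lia. Qed.

Definition block_start (u : R) : nat := #|[pred j : 'I_n | u < mu j]|.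

Definition block_head (j : 'I_n) : bool :=
  [forall k : 'I_n, (k < j)%N ==> (mu k != mu j)].

Lemma gt_block_start (u : R) (j : 'I_n) : (u < mu j) = (j < block_start u)%N.
Proof.
apply: (downclosed_mem_card (A := [pred j | u < mu j]) _ j) => a b leab /= ltub.
exact: lt_le_trans ltub (mu_nonincreasing leab).
Qed.

Lemma ge_block_end (u : R) (j : 'I_n) :
  (u <= mu j) = (j < block_start u + mval mu u)%N.
Proof.
rewrite /block_start -card_ge_split.
apply: (downclosed_mem_card (A := [pred j | u <= mu j]) _ j) => a b leab /= leub.
exact: le_trans leub (mu_nonincreasing leab).
Qed.

Lemma mu_eq_block (u : R) (j : 'I_n) :
  (mu j == u) = (block_start u <= j < block_start u + mval mu u)%N.
Proof. by rewrite eq_le leNgt gt_block_start ge_block_end -leqNgt. Qed.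

Lemma block_end_leq (u : R) : (block_start u + mval mu u <= n)%N.
Proof.
by rewrite /block_start -card_ge_split; apply: leq_trans (max_card _) _; rewrite card_ord.
Qed.

Lemma mu_block_start (u : R) (j : 'I_n) :
  (0 < mval mu u)%N -> val j = block_start u -> mu j = u.
Proof. by move=> mv_gt0 eq_j; apply/eqP; rewrite mu_eq_block eq_j leqnn /=; lia. Qed.

Lemma block_headE (j : 'I_n) : block_head j = (val j == block_start (mu j)).
Proof.
have := mu_eq_block (mu j) j; rewrite eqxx => /esym/andP[le_start lt_end].
apply/forallP/eqP => [head_j | eq_j k]; last first.
  by apply/implyP => ltkj; rewrite eq_sym lt_eqF // gt_block_start -eq_j.
apply/eqP; rewrite eqn_leq le_start andbT leqNgt; apply/negP => lt_start.
have lt_n : (block_start (mu j) < n)%N by have := ltn_ord j; lia.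
have := head_j (Ordinal lt_n); rewrite /= lt_start /=.
by rewrite mu_eq_block /= leqnn /=; lia.
Qed.

Lemma card_block_heads (u : R) : (0 < mval mu u)%N ->
  #|[pred j | (mu j == u) && block_head j]| = 1%N.
Proof.
move=> mv_gt0; have lt_n : (block_start u < n)%N by have := block_end_leq u; lia.
apply: (@eq_card1 _ (Ordinal lt_n)) => j; rewrite !inE block_headE.
apply/andP/eqP => [[/eqP eq_u /eqP eq_j] | ->]; first by apply: val_inj; rewrite /= eq_j eq_u.
by rewrite (@mu_block_start u (Ordinal lt_n)) ?eqxx.
Qed.

Definition vals : seq R :=
  undup ([seq lam j | j <- enum 'I_n.+1] ++ [seq mu j | j <- enum 'I_n]).

Definition Wvals : seq R := [seq u <- vals | isW u].

Definition Mvals : seq R := [seq u <- vals | isM u].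

Lemma vals_uniq : uniq vals. Proof. exact: undup_uniq. Qed.

Lemma Wvals_uniq : uniq Wvals. Proof. exact/filter_uniq/vals_uniq. Qed.

Lemma Mvals_uniq : uniq Mvals. Proof. exact/filter_uniq/vals_uniq. Qed.

Lemma lam_in_vals (j : 'I_n.+1) : lam j \in vals.
Proof. by rewrite mem_undup mem_cat map_f ?mem_enum. Qed.

Lemma mu_in_vals (j : 'I_n) : mu j \in vals.
Proof. by rewrite mem_undup mem_cat orbC map_f ?mem_enum. Qed.

Lemma mem_vals_mu (u : R) : (0 < mval mu u)%N -> u \in vals.
Proof. by rewrite mval_gt0 => /mapP[j _ ->]; apply: mu_in_vals. Qed.

Lemma mem_vals_lam (u : R) : (0 < mval lam u)%N -> u \in vals.
Proof. by rewrite mval_gt0 => /mapP[j _ ->]; apply: lam_in_vals. Qed.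

Lemma sum_Wvals_Mvals (V : nmodType) (F : R -> V) :
  \sum_(u <- Wvals) F u + \sum_j F (mu j) = \sum_(u <- Mvals) F u + \sum_j F (lam j).
Proof.
rewrite !sum_filter_mulrn (sum_by_values vals_uniq mu_in_vals).
rewrite (sum_by_values vals_uniq lam_in_vals) -!big_split /=.
by apply: eq_bigr => u _; rewrite -!mulrnDr addnC -shape_balance addnC.
Qed.

Lemma size_Wvals : size Wvals = (size Mvals).+1.
Proof.
have := sum_Wvals_Mvals (fun=> 1%N).
by rewrite /= (sum1_card 'I_n) (sum1_card 'I_n.+1) !card_ord !sum1_size; lia.
Qed.

Lemma cconstE : cconst lam mu = \sum_(u <- Wvals) u - \sum_(u <- Mvals) u.
Proof. by have := sum_Wvals_Mvals id; rewrite /cconst; lra. Qed.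

Lemma count_Wvals_Mvals (P : pred R) :
  (count P Wvals + #|[pred j | P (mu j)]| = count P Mvals + #|[pred j | P (lam j)]|)%N.
Proof.
have := sum_Wvals_Mvals (fun u => P u : nat).
by rewrite -!big_mkcond !sum1_count !count_index_enum; apply.
Qed.

Lemma Mshape_count_gt (v : R) : isM v ->
  count (fun u : R => v < u) Wvals = (count (fun u : R => v < u) Mvals).+1.
Proof.
by move=> Mv; have := count_Wvals_Mvals (fun u => v < u); rewrite Mshape_card_gt //; lia.
Qed.

Lemma perm_Wvals : perm_eq [seq l <- dvals lam | isW l] Wvals.
Proof.
apply: uniq_perm => [||u]; [exact/filter_uniq/dvals_uniq | exact: Wvals_uniq |].
rewrite /Wvals !mem_filter mem_dvals; case Wu: (isW u) => //=.
by move: Wu; rewrite /isWshape => /eqP eq_mval; rewrite eq_mval mem_vals_lam ?eq_mval.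
Qed.

Lemma perm_Mvals : perm_eq [seq t <- dvals mu | isM t] Mvals.
Proof.
apply: uniq_perm => [||u]; [exact/filter_uniq/dvals_uniq | exact: Mvals_uniq |].
rewrite /Mvals !mem_filter mem_dvals; case Mu: (isM u) => //=.
by move: Mu; rewrite /isMshape => /eqP eq_mval; rewrite eq_mval mem_vals_mu ?eq_mval.
Qed.

Lemma rsqE (v : R) :
  rsq lam mu v = - (\prod_(l <- Wvals) (v - l)) / \prod_(t <- Mvals | t != v) (v - t).
Proof.
rewrite /rsq prodfV -big_filter (perm_big _ perm_Wvals).
by rewrite -big_filter_cond (perm_big _ perm_Mvals).
Qed.

Lemma rsq_gt0 (v : R) : isM v -> 0 < rsq lam mu v.
Proof.
(* Numerator and denominator have the signs (-1)^(1 + #{l in W | l > v}) and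
   (-1)^#{t in M | t > v}, and one more W-value than M-values lies above v. *)
move=> Mv; rewrite rsqE -[X in _ / X]big_filter.
set s := [seq t <- Mvals | t != v].
have vW : v \notin Wvals by rewrite mem_filter (negbTE (Mshape_notW Mv)).
have vs : v \notin s by rewrite mem_filter eqxx.
have count_s : count (fun u : R => v < u) s = count (fun u : R => v < u) Mvals.
  by rewrite count_filter; apply: eq_count => t /=; case: ltgtP => // ->.
have := prod_sub_sign vW; have := prod_sub_sign vs.
rewrite count_s (Mshape_count_gt Mv) exprS.
set e := (-1) ^+ _; set PW := \prod_(l <- Wvals) _; set Ps := \prod_(l <- s) _.
move=> Ps_gt0 PW_gt0.
have e_neq0 : e != 0 by rewrite expf_neq0 // oppr_eq0 oner_eq0.
have Ps_neq0 : Ps != 0 by apply: contraTneq Ps_gt0 => ->; rewrite mulr0 ltxx.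
rewrite (_ : - PW / Ps = (-1 * e * PW) / (e * Ps)); first exact: divr_gt0.
by field; rewrite e_neq0 Ps_neq0.
Qed.

Definition Wpoly : {poly R} := \prod_(u <- Wvals) ('X - u%:P).

Definition Mpoly : {poly R} := \prod_(u <- Mvals) ('X - u%:P).

Definition Mpoly_but (t : R) : {poly R} := \prod_(u <- Mvals | u != t) ('X - u%:P).

Lemma Mpoly_but_self (t : R) : (Mpoly_but t).[t] != 0.
Proof.
rewrite horner_prod prodf_seq_neq0; apply/allP => u _.
by apply/implyP; rewrite hornerXsubC subr_eq0 eq_sym.
Qed.

Lemma Mpoly_but_other (t u : R) : u \in Mvals -> u != t -> (Mpoly_but t).[u] = 0.
Proof.
move=> uM neq_ut; rewrite horner_prod -big_filter (bigD1_seq u) /=.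
- by rewrite hornerXsubC subrr mul0r.
- by rewrite mem_filter neq_ut.
- exact/filter_uniq/Mvals_uniq.
Qed.

Lemma horner_Mpoly (t v : R) : t \in Mvals -> Mpoly.[v] = (v - t) * (Mpoly_but t).[v].
Proof.
move=> tM; rewrite !horner_prod (bigD1_seq t) ?Mvals_uniq //=.
by rewrite hornerXsubC.
Qed.

Lemma size_Mpoly_but (t : R) : t \in Mvals -> size (Mpoly_but t) = size Mvals.
Proof.
move=> tM; rewrite /Mpoly_but -big_filter size_prod_XsubC -rem_filter ?Mvals_uniq //.
by rewrite size_rem // prednK // -has_predT; apply/hasP; exists t.
Qed.

Lemma size_Wpoly_sub_leq : (size (Wpoly - ('X - c%:P) * Mpoly)%R <= size Mvals)%N.
Proof.
have size_W : size Wpoly = (size Mvals).+2 by rewrite size_prod_XsubC size_Wvals.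
have size_M : size Mpoly = (size Mvals).+1 by rewrite size_prod_XsubC.
apply: size_sub_monic_leq => //.
- exact: monic_prod_XsubC.
- by rewrite monicMl ?monicXsubC ?monic_prod_XsubC.
- by rewrite size_Mmonic ?monic_prod_XsubC ?polyXsubC_eq0 // size_XsubC size_M.
have := coefPn_prod_XsubC (ps := Wvals); rewrite size_Wvals => -> //.
rewrite mulrBl coefB coefXM coefCM (_ : Mpoly`_(size Mvals) = 1); last first.
  have /monicP : Mpoly \is monic by exact: monic_prod_XsubC.
  by rewrite lead_coefE size_M.
have -> : (if size Mvals == 0%N then 0 else Mpoly`_(size Mvals).-1) = - \sum_(u <- Mvals) u.
  case: eqP => [/size0nil -> | /eqP nil_M]; first by rewrite big_nil oppr0.
  exact: coefPn_prod_XsubC.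
by rewrite cconstE; ring.
Qed.

Lemma Wpoly_partial_fractions :
  Wpoly = ('X - c%:P) * Mpoly +
          \sum_(t <- Mvals) (Wpoly.[t] / (Mpoly_but t).[t]) *: Mpoly_but t.
Proof.
apply/eqP; rewrite -subr_eq0 opprD addrA subr_eq0; apply/eqP.
apply: (eq_poly_on (s := Mvals)) => [|||u uM]; [exact: Mvals_uniq | exact: size_Wpoly_sub_leq | |].
  rewrite big_seq; apply: (big_ind (fun p : {poly R} => size p <= size Mvals)%N).
  - by rewrite size_poly0.
  - by move=> p q ? ?; apply: leq_trans (size_polyD _ _) _; rewrite geq_max; apply/andP.
  - by move=> t tM; apply: leq_trans (size_scale_leq _ _) _; rewrite size_Mpoly_but.
rewrite hornerD hornerN hornerM (horner_Mpoly _ uM) subrr mul0r mulr0 subr0.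
rewrite horner_sum (bigD1_seq u) ?Mvals_uniq //= hornerZ divfK ?Mpoly_but_self //.
rewrite big1_seq ?addr0 // => t /andP[neq_tu tM].
by rewrite hornerZ (Mpoly_but_other uM) 1?eq_sym ?mulr0.
Qed.

Definition kappa (v : R) : R := c - v + \sum_(t <- Mvals) rsq lam mu t / (v - t).

Lemma rsq_horner (t : R) : rsq lam mu t = - Wpoly.[t] / (Mpoly_but t).[t].
Proof.
rewrite rsqE /Wpoly /Mpoly_but !horner_prod.
by congr (- _ / _); apply: eq_bigr => u _; rewrite hornerXsubC.
Qed.

Lemma kappa_Mpoly (v : R) : v \notin Mvals -> kappa v * Mpoly.[v] = - Wpoly.[v].
Proof.
move=> vM; rewrite [in RHS]Wpoly_partial_fractions hornerD hornerM hornerXsubC horner_sum.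
rewrite /kappa mulrDl mulr_suml opprD -sumrN; congr (_ + _); first by ring.
rewrite big_seq [RHS]big_seq; apply: eq_bigr => t tM.
have neq_vt : v - t != 0 by rewrite subr_eq0; apply: contraNneq vM => ->.
rewrite hornerZ rsq_horner (horner_Mpoly _ tM).
by field; rewrite neq_vt Mpoly_but_self.
Qed.

Lemma kappa_eq0 (v : R) : v \notin Mvals -> v \in vals ->
  (kappa v == 0) = isW v.
Proof.
move=> vM v_vals; have := kappa_Mpoly vM.
have M_neq0 : Mpoly.[v] != 0 by rewrite -rootE root_prod_XsubC.
have -> : isW v = root Wpoly v by rewrite root_prod_XsubC mem_filter v_vals andbT.
by rewrite rootE -[Wpoly.[v] == 0]oppr_eq0 => <-; rewrite mulf_eq0 (negbTE M_neq0) orbF.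
Qed.

End Interlacing.

Section Tangent.
Variables (R : rcfType) (n : nat) (lam : 'I_n.+1 -> R) (mu : 'I_n -> R).
Local Notation C := R[i].
Local Notation p := (ptilde lam mu).
Local Notation c := (cconst lam mu).

Definition zr (j : 'I_n) : R := if block_head mu j then rval lam mu (mu j) else 0.
Local Notation z j := (toC (zr j)).

Lemma zvecE (j : 'I_n) : zvec lam mu j = z j.
Proof. by rewrite /zvec /zr /block_head; case: ifP. Qed.

Lemma ptildeE00 : p ord0 ord0 = toC c.
Proof. by rewrite mxE unlift_none. Qed.

Lemma ptildeE0l (k : 'I_n) : p ord0 (lift ord0 k) = z k.
Proof. by rewrite mxE unlift_none liftK zvecE conjc_toC. Qed.

Lemma ptildeEl0 (j : 'I_n) : p (lift ord0 j) ord0 = z j.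
Proof. by rewrite mxE unlift_none liftK zvecE. Qed.

Lemma ptildeEll (j k : 'I_n) :
  p (lift ord0 j) (lift ord0 k) = if j == k then toC (mu j) else 0.
Proof. by rewrite mxE !liftK. Qed.

Lemma mulmx_liftE (A B : 'M[C]_n.+1) a b :
  (A *m B) a b = A a ord0 * B ord0 b + \sum_k A a (lift ord0 k) * B (lift ord0 k) b.
Proof. by rewrite mxE big_ord_recl. Qed.

Lemma lie_ptildeEl0 (X : 'M[C]_n.+1) (j : 'I_n) :
  lie X p (lift ord0 j) ord0 =
  X (lift ord0 j) ord0 * toC c + \sum_k X (lift ord0 j) (lift ord0 k) * z k
  - (z j * X ord0 ord0 + toC (mu j) * X (lift ord0 j) ord0).
Proof.
rewrite !mxE !big_ord_recl ptildeE00 ptildeEl0; under eq_bigr do rewrite ptildeEl0.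
congr (_ + _ - (_ + _)); rewrite (bigD1 j) //= ptildeEll eqxx big1 ?addr0 // => k neq_kj.
by rewrite ptildeEll eq_sym (negbTE neq_kj) mul0r.
Qed.

Lemma lie_ptildeEll (X : 'M[C]_n.+1) (j k : 'I_n) :
  lie X p (lift ord0 j) (lift ord0 k) =
  X (lift ord0 j) ord0 * z k + X (lift ord0 j) (lift ord0 k) * toC (mu k)
  - (z j * X ord0 (lift ord0 k) + toC (mu j) * X (lift ord0 j) (lift ord0 k)).
Proof.
rewrite !mxE !big_ord_recl ptildeE0l ptildeEl0; congr (_ + _ - (_ + _)).
  rewrite (bigD1 k) //= ptildeEll eqxx big1 ?addr0 // => l neq_lk.
  by rewrite ptildeEll (negbTE neq_lk) mulr0.
rewrite (bigD1 j) //= ptildeEll eqxx big1 ?addr0 // => l neq_lj.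
by rewrite ptildeEll eq_sym (negbTE neq_lj) mul0r.
Qed.

Lemma diag0E0 (Y : 'M[C]_n) a : diag0 Y ord0 a = 0.
Proof. by rewrite mxE unlift_none. Qed.

Lemma diag0E1 (Y : 'M[C]_n) a : diag0 Y a ord0 = 0.
Proof. by rewrite mxE unlift_none; case: unlift. Qed.

Lemma diag0Ell (Y : 'M[C]_n) (j k : 'I_n) : diag0 Y (lift ord0 j) (lift ord0 k) = Y j k.
Proof. by rewrite mxE !liftK. Qed.

Lemma skewH_diag0 (Y : 'M[C]_n) : skewH Y -> skewH (diag0 Y).
Proof.
move=> skewY; apply/matrixP => a b; rewrite adjmxE [RHS]mxE.
case: (unliftP ord0 a) => [j ->|->]; case: (unliftP ord0 b) => [k ->|->];
  by rewrite ?diag0E0 ?diag0E1 ?diag0Ell ?rmorph0 ?oppr0 ?(skewHE skewY).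
Qed.

Definition drblock (A : 'M[C]_n.+1) : 'M[C]_n := \matrix_(j, k) A (lift ord0 j) (lift ord0 k).

Lemma drblockE (A : 'M[C]_n.+1) (j k : 'I_n) : drblock A j k = A (lift ord0 j) (lift ord0 k).
Proof. exact: mxE. Qed.

Lemma mxtrace_mul_diag0 (A : 'M[C]_n.+1) (Y : 'M[C]_n) :
  \tr (A *m diag0 Y) = \tr (drblock A *m Y).
Proof.
rewrite /mxtrace big_ord_recl mulmx_liftE diag0E0 mulr0 add0r big1 ?add0r => [|k _].
  apply: eq_bigr => j _; rewrite mulmx_liftE diag0E0 mulr0 add0r mxE.
  by apply: eq_bigr => k _; rewrite diag0Ell mxE.
by rewrite diag0E1 mulr0.
Qed.

Lemma omegaKKS_diag0 (X : 'M[C]_n.+1) (Y : 'M[C]_n) :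
  omegaKKS p X (diag0 Y) = - (imag_unit R)^-1 * \tr (drblock (lie X p) *m Y).
Proof.
rewrite /omegaKKS -mxtrace_mul_diag0 mulNr -mulrN; congr (_ * _).
rewrite /lie mulmxBr mulmxBl !raddfB /= !mulmxA.
by rewrite (mxtrace_mulC (p *m diag0 Y)) mulmxA opprK addrC.
Qed.

Lemma omega_orthP (X : 'M[C]_n.+1) :
  (forall Y, skewH Y -> omegaKKS p X (diag0 Y) = 0) <-> drblock (lie X p) = 0.
Proof.
have i_neq0 : - (imag_unit R)^-1 != 0 by rewrite oppr_eq0 invr_eq0 imag_unit_neq0.
split=> [omega0 | dr0 Y _]; last by rewrite omegaKKS_diag0 dr0 mul0mx mxtrace0 mulr0.
apply: skewH_trace_eq0 => Y /omega0; rewrite omegaKKS_diag0 => /eqP.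
by rewrite mulf_eq0 (negbTE i_neq0) => /eqP.
Qed.

Lemma VspP (v : 'cV[C]_n) :
  Vsp p v <-> exists X, [/\ skewH X, drblock (lie X p) = 0 & v = Tmap (lie X p)].
Proof.
split=> [[_ [X [skewX -> /omega_orthP dr0]] <-] | [X [skewX dr0 ->]]].
  by exists X.
by exists (lie X p) => //; exists X; split=> //; apply/omega_orthP.
Qed.

Lemma drblock_lie_diag0 (Y : 'M[C]_n) (j k : 'I_n) :
  drblock (lie (diag0 Y) p) j k = Y j k * (toC (mu k) - toC (mu j)).
Proof. by rewrite mxE lie_ptildeEll diag0E1 diag0E0 diag0Ell; ring. Qed.

Lemma Tmap_lie_diag0 (Y : 'M[C]_n) (j : 'I_n) :
  Tmap (lie (diag0 Y) p) j ord0 = \sum_k Y j k * z k.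
Proof.
rewrite mxE lie_ptildeEl0 diag0E1 diag0E0; under eq_bigr do rewrite diag0Ell.
by rewrite !mulr0 mul0r !add0r subr0.
Qed.

Lemma UspP (v : 'cV[C]_n) :
  Usp p v <-> exists Y, [/\ skewH Y, (forall j k, mu j != mu k -> Y j k = 0) &
                          v = Tmap (lie (diag0 Y) p)].
Proof.
split=> [[_ [[Y [skewY ->]] [X [_ eqX /omega_orthP dr0]] <-]] | [Y [skewY Yblock ->]]].
  exists Y; split=> // j k neq_mu; apply/eqP.
  move/matrixP/(_ j k): dr0; rewrite -eqX drblock_lie_diag0 mxE => /eqP.
  by rewrite mulf_eq0 toC_subr_eq0 (eq_sym (mu k)) (negbTE neq_mu) orbF.
exists (lie (diag0 Y) p); split=> //; first by exists Y.
exists (diag0 Y); split; [exact: skewH_diag0 | by [] |].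
apply/omega_orthP/matrixP => j k; rewrite drblock_lie_diag0 mxE.
by case: (eqVneq (mu j) (mu k)) => [->|/Yblock->]; rewrite ?subrr ?mulr0 ?mul0r.
Qed.

(* The entries off the diagonal blocks are forced by [drblock (lie X p) = 0], see
   [lie_ptilde_offblock] below. *)
Definition orth_lift (w : 'I_n -> C) : 'M[C]_n.+1 := \matrix_(a, b)
  match unlift ord0 a, unlift ord0 b with
  | None, None => 0
  | None, Some k => - conjc (w k)
  | Some j, None => w j
  | Some j, Some k => if mu j == mu k then 0
                      else - (w j * z k + z j * conjc (w k)) / (toC (mu k) - toC (mu j))
  end.

Lemma orth_liftEl0 (w : 'I_n -> C) (j : 'I_n) : orth_lift w (lift ord0 j) ord0 = w j.
Proof. by rewrite mxE unlift_none liftK. Qed.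

Lemma skewH_orth_lift (w : 'I_n -> C) : skewH (orth_lift w).
Proof.
apply/matrixP => a b; rewrite adjmxE !mxE.
case: (unliftP ord0 a) => [j _|_]; case: (unliftP ord0 b) => [k _|_];
  rewrite ?rmorph0 ?rmorphN /= ?conjcK ?opprK ?oppr0 //.
rewrite eq_sym; case: eqVneq => [_|neq_mu]; first by rewrite rmorph0 oppr0.
rewrite rmorphM rmorphN fmorphV rmorphD !rmorphM rmorphB /= !conjcK !conjc_toC.
by field; rewrite !toC_subr_eq0 neq_mu eq_sym neq_mu.
Qed.

Lemma drblock_lie_orth_lift (w : 'I_n -> C) :
  (forall j k, mu j = mu k -> w j * z k = 0) -> drblock (lie (orth_lift w) p) = 0.
Proof.
move=> wz0; apply/matrixP => j k; rewrite drblockE lie_ptildeEll !mxE !unlift_none !liftK.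
case: eqVneq => [eq_mu|neq_mu].
  have wz0' : z j * conjc (w k) = 0.
    by rewrite -conjc_toC -rmorphM mulrC (wz0 k j) ?rmorph0.
  by rewrite mulrN wz0' wz0 // !mulr0 !mul0r; ring.
have neq0 : toC (mu k) - toC (mu j) != 0 by rewrite toC_subr_eq0 eq_sym.
by field.
Qed.

Definition hook_mx (f : 'I_n) (u : 'I_n -> C) : 'M[C]_n := \matrix_(j, k)
  if (mu j == mu f) && (k == f) then u j
  else if (mu k == mu f) && (j == f) then - conjc (u k) else 0.

Lemma skewH_hook_mx (f : 'I_n) (u : 'I_n -> C) : u f \in imaginary -> skewH (hook_mx f u).
Proof.
move=> /eqP uf_im; apply/matrixP => j k; rewrite adjmxE !mxE.
have [->|neq_jf] := eqVneq j f; have [->|neq_kf] := eqVneq k f;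
  rewrite ?eqxx ?andbT ?andbF //=.
- by case: ifP; rewrite ?rmorph0 ?oppr0 // opprK.
- by case: ifP; rewrite ?rmorph0 ?oppr0 // rmorphN /= conjcK.
- by rewrite rmorph0 oppr0.
Qed.

Lemma hook_mx_block (f : 'I_n) (u : 'I_n -> C) (j k : 'I_n) :
  mu j != mu k -> hook_mx f u j k = 0.
Proof.
move=> neq_mu; rewrite mxE.
case: andP => [[/eqP eq_j /eqP eq_k]|_]; first by move: neq_mu; rewrite eq_j eq_k eqxx.
by case: andP => // [[/eqP eq_k /eqP eq_j]]; move: neq_mu; rewrite eq_j eq_k eqxx.
Qed.
End Tangent.

Section Blocks.
Variables (R : rcfType) (n : nat) (lam : 'I_n.+1 -> R) (mu : 'I_n -> R).
Hypothesis interlacing : forall j : 'I_n,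
  mu j <= lam (widen_ord (leqnSn n) j) /\ lam (lift ord0 j) <= mu j.
Local Notation C := R[i].
Local Notation p := (ptilde lam mu).
Local Notation zr := (zr lam mu).
Local Notation z j := (toC (zr j)).
Local Notation isM := (isMshape lam mu).
Local Notation isW := (isWshape lam mu).
Local Notation isP := (isPshape lam mu).

Lemma zr_notM (j : 'I_n) : ~~ isM (mu j) -> zr j = 0.
Proof. by rewrite /zr /rval => /negbTE->; case: ifP. Qed.

Lemma zr_neq0_head (j : 'I_n) : zr j != 0 -> block_head mu j.
Proof. by rewrite /zr; case: ifP; rewrite ?eqxx. Qed.

Lemma block_head_inj (j k : 'I_n) :
  block_head mu j -> block_head mu k -> mu j = mu k -> j = k.
Proof.
rewrite !(block_headE interlacing) => /eqP eq_j /eqP eq_k eq_mu.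
by apply: val_inj; rewrite eq_j eq_k eq_mu.
Qed.

Lemma sum_zr_sq (x : R) :
  \sum_k zr k ^+ 2 / (x - mu k) = \sum_(t <- Mvals lam mu) rsq lam mu t / (x - t).
Proof.
rewrite (sum_by_fibers (vals_uniq lam mu) (mu_in_vals lam mu)) sum_filter_mulrn.
apply: eq_bigr => u _; case Mu: (isM u); last first.
  by rewrite big1 // => k /eqP eq_ku; rewrite zr_notM ?eq_ku ?Mu // expr0n mul0r.
rewrite (eq_bigr (fun k => if block_head mu k then rsq lam mu u / (x - u) else 0)).
  rewrite -big_mkcondr sumr_const (card_block_heads interlacing) //.
  by move: Mu; rewrite /isMshape => /eqP->.
move=> k /eqP eq_ku; rewrite /zr /rval eq_ku Mu; case: ifP; rewrite ?expr0n ?mul0r //.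
by rewrite sqr_sqrtr ?ltW ?(rsq_gt0 interlacing).
Qed.

Lemma lie_ptilde_offblock (X : 'M[C]_n.+1) (j k : 'I_n) :
  lie X p (lift ord0 j) (lift ord0 k) = 0 -> mu j != mu k ->
  X (lift ord0 j) (lift ord0 k) =
  (z j * X ord0 (lift ord0 k) - X (lift ord0 j) ord0 * z k) / (toC (mu k) - toC (mu j)).
Proof.
rewrite lie_ptildeEll => lie0 neq_mu.
have neq0 : toC (mu k) - toC (mu j) != 0 by rewrite toC_subr_eq0 eq_sym.
apply: (mulIf neq0); rewrite divfK //; apply/eqP; rewrite -subr_eq0 -lie0; apply/eqP; ring.
Qed.

Lemma lie_ptildeEl0_notM (X : 'M[C]_n.+1) (j : 'I_n) :
  drblock (lie X p) = 0 -> ~~ isM (mu j) ->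
  lie X p (lift ord0 j) ord0 = X (lift ord0 j) ord0 * toC (kappa lam mu (mu j)).
Proof.
move=> /matrixP dr0 notMj.
have z_block k : mu k = mu j -> zr k = 0 by move=> eq_mu; rewrite zr_notM // eq_mu.
have term k : X (lift ord0 j) (lift ord0 k) * z k =
    X (lift ord0 j) ord0 * toC (zr k ^+ 2 / (mu j - mu k)).
  case: (eqVneq (mu k) (mu j)) => [/z_block->|neq_mu].
    by rewrite expr0n mul0r !rmorph0 !mulr0.
  have neq_jk : mu j != mu k by rewrite eq_sym.
  have := dr0 j k; rewrite drblockE [RHS]mxE => /lie_ptilde_offblock/(_ neq_jk)->.
  rewrite z_block // rmorph0 mul0r sub0r.
  rewrite rmorphM fmorphV rmorphXn rmorphB /=.
  by field; rewrite !toC_subr_eq0 neq_mu eq_sym neq_mu.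
rewrite lie_ptildeEl0 (eq_bigr _ (fun k _ => term k)) -mulr_sumr -rmorph_sum sum_zr_sq.
by rewrite z_block // /kappa !rmorphD rmorphN; ring.
Qed.

Lemma col_head_imaginary (X : 'M[C]_n.+1) (k : 'I_n) :
  skewH X -> drblock (lie X p) = 0 -> zr k != 0 -> X (lift ord0 k) ord0 \in imaginary.
Proof.
move=> skewX /matrixP/(_ k k) + zk_neq0.
rewrite drblockE lie_ptildeEll mxE (skewH_entry skewX ord0).
set x := X (lift ord0 k) ord0; rewrite (_ : _ - _ = z k * (x + conjc x)); last by ring.
by move/eqP; rewrite mulf_eq0 fmorph_eq0 (negbTE zk_neq0) imaginary_addJ.
Qed.

Lemma lie_head_imaginary (X : 'M[C]_n.+1) (f : 'I_n) :
  skewH X -> drblock (lie X p) = 0 -> zr f != 0 -> lie X p (lift ord0 f) ord0 \in imaginary.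
Proof.
move=> skewX dr0 zf_neq0; have Xf0 := col_head_imaginary skewX dr0 zf_neq0.
have diagX a : X a a \in imaginary by rewrite imaginaryE (skewHE skewX).
rewrite lie_ptildeEl0 rpredB ?rpredD ?imaginaryMr ?imaginaryMl //.
apply: rpred_sum => k _; have [->|zk_neq0] := eqVneq (zr k) 0.
  by rewrite rmorph0 mulr0 rpred0.
apply: imaginaryMr; have [->|neq_kf] := eqVneq k f; first exact: diagX.
have neq_mu : mu f != mu k.
  by apply: contra_neq neq_kf => eq_mu; apply: block_head_inj; rewrite ?zr_neq0_head.
have /matrixP/(_ f k) := dr0; rewrite drblockE [RHS]mxE => /lie_ptilde_offblock/(_ neq_mu)->.
rewrite -rmorphB -fmorphV imaginaryMr // rpredB ?imaginaryMl ?imaginaryMr //.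
by rewrite (skewH_entry skewX ord0) rpredN imaginaryJ ?col_head_imaginary.
Qed.

Variable i : nat.
Local Notation v := (blockval mu i).

Lemma blockval_mval_gt0 : (i < mblocks mu)%N -> (0 < mval mu v)%N.
Proof. by move=> lt_i; rewrite -mem_dvals mem_nth. Qed.

Lemma projblock_idx_subproof (k : 'I_(blocksize mu i)) : (blockstart mu i + k < n)%N.
Proof.
have := ltn_ord k; have := block_end_leq mu v.
by rewrite /blocksize /blockstart /block_start; lia.
Qed.

Local Notation idx k := (Ordinal (projblock_idx_subproof k)).

Lemma mu_projblock_idx (k : 'I_(blocksize mu i)) : mu (idx k) = v.
Proof.
apply/eqP; rewrite (mu_eq_block interlacing) /= /blockstart leq_addr /=.
by rewrite ltn_add2l; apply: ltn_ord.
Qed.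

Lemma projblockE (w : 'cV[C]_n) (k : 'I_(blocksize mu i)) :
  projblock mu i w k ord0 = w (idx k) ord0.
Proof.
rewrite mxE (nth_map (idx k)) ?size_enum_ord ?projblock_idx_subproof //.
by rewrite -[(blockstart mu i + k)%N]/(val (idx k)) nth_ord_enum.
Qed.

Lemma eq_projblock (w1 w2 : 'cV[C]_n) :
  (forall j, mu j = v -> w1 j ord0 = w2 j ord0) -> projblock mu i w1 = projblock mu i w2.
Proof.
move=> eq_w; apply/matrixP => k l; rewrite (ord1 l) !projblockE.
exact/eq_w/mu_projblock_idx.
Qed.

Definition blockext (y : 'cV[C]_(blocksize mu i)) : 'cV[C]_n :=
  \col_j if (blockstart mu i <= j)%N
         then oapp (fun k => y k ord0) 0 (insub (j - blockstart mu i)%N) else 0.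

Lemma projblock_ext (y : 'cV[C]_(blocksize mu i)) : projblock mu i (blockext y) = y.
Proof.
apply/matrixP => k l; rewrite (ord1 l) projblockE mxE /= leq_addr addKn.
rewrite (insubT (fun m => m < blocksize mu i)%N (ltn_ord k)) /=.
by congr (y _ _); apply: val_inj.
Qed.

Lemma Ublock0 : Ublock lam mu i 0.
Proof.
exists 0; last by apply/matrixP => k l; rewrite (ord1 l) projblockE !mxE.
apply/UspP; exists 0; split=> [|j k _|]; rewrite ?mxE //; first exact: skewH0.
by apply/matrixP => j l; rewrite (ord1 l) Tmap_lie_diag0 mxE big1 // => k _; rewrite mxE mul0r.
Qed.

Lemma notMshape_Ublock_eq0 (w : 'cV[C]_(blocksize mu i)) :
  ~~ isM v -> Ublock lam mu i w -> w = 0.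
Proof.
move=> notMv [_ /UspP[Y [_ Yblock ->]] <-].
apply/matrixP => k l; rewrite (ord1 l) projblockE Tmap_lie_diag0 mxE big1 // => j _.
have [eq_mu|/Yblock->] := eqVneq (mu (idx k)) (mu j); last by rewrite mul0r.
by rewrite zr_notM ?rmorph0 ?mulr0 // -eq_mu mu_projblock_idx.
Qed.

Lemma Wshape_Vblock_eq0 (w : 'cV[C]_(blocksize mu i)) :
  isW v -> Vblock lam mu i w -> w = 0.
Proof.
move=> Wv [_ /VspP[X [_ dr0 ->]] <-].
have notMv : ~~ isM v by apply: contraTN Wv; apply: Mshape_notW.
have /eqP kappa0 : kappa lam mu v == 0.
  rewrite (kappa_eq0 interlacing) ?mem_filter ?(negbTE notMv) // mem_vals_lam //.
  by move: Wv; rewrite /isWshape => /eqP->.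
apply/matrixP => k l; rewrite (ord1 l) projblockE mxE lie_ptildeEl0_notM //.
  by rewrite mu_projblock_idx kappa0 rmorph0 mulr0 mxE.
by rewrite mu_projblock_idx.
Qed.

Lemma Pshape_Vblock_full : (i < mblocks mu)%N -> isP v ->
  forall y, Vblock lam mu i y.
Proof.
move=> lt_i Pv y; have notMv := Pshape_notM Pv.
have kappa_neq0 : toC (kappa lam mu v) != 0.
  rewrite fmorph_eq0 (kappa_eq0 interlacing) ?mem_filter ?(negbTE notMv) //.
    exact: Pshape_notW.
  exact/mem_vals_mu/blockval_mval_gt0.
pose w : 'I_n -> C :=
  fun j => if mu j == v then blockext y j ord0 / toC (kappa lam mu v) else 0.
have dr0 : drblock (lie (orth_lift lam mu w) p) = 0.
  apply: drblock_lie_orth_lift => j k eq_mu; rewrite /w; case: eqP => [eq_j|_].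
    by rewrite zr_notM ?rmorph0 ?mulr0 // -eq_mu eq_j.
  by rewrite mul0r.
exists (Tmap (lie (orth_lift lam mu w) p)).
  by apply/VspP; exists (orth_lift lam mu w); split=> //; apply: skewH_orth_lift.
rewrite -[RHS]projblock_ext; apply: eq_projblock => j eq_j.
rewrite mxE lie_ptildeEl0_notM ?eq_j // orth_liftEl0 /w eq_j eqxx divfK //.
Qed.

Lemma Mshape_Vblock_sub_Ublock (w : 'cV[C]_(blocksize mu i)) :
  isM v -> Vblock lam mu i w -> Ublock lam mu i w.
Proof.
move=> Mv [_ /VspP[X [skewX dr0 ->]] <-]; set t := Tmap (lie X p).
have mv_gt0 : (0 < mval mu v)%N by move: Mv; rewrite /isMshape => /eqP->.
have lt_n : (block_start mu v < n)%N by have := block_end_leq mu v; lia.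
pose f := Ordinal lt_n; have mu_f : mu f = v by apply: (mu_block_start interlacing mv_gt0).
have head_f : block_head mu f by rewrite (block_headE interlacing) mu_f.
pose r := rval lam mu v; have zr_f : zr f = r by rewrite /zr head_f mu_f.
have r_gt0 : 0 < r by rewrite /r /rval Mv sqrtr_gt0 (rsq_gt0 interlacing).
have z_block k : zr k != 0 -> mu k = v -> k = f.
  by move=> zk_neq0 eq_k; apply: block_head_inj; rewrite ?(zr_neq0_head zk_neq0) ?eq_k ?mu_f.
pose Y := hook_mx mu f (fun j => t j ord0 * toC r^-1).
have skewY : skewH Y.
  apply/skewH_hook_mx/imaginaryMr; rewrite mxE.
  by apply: lie_head_imaginary => //; rewrite zr_f gt_eqF.
exists (Tmap (lie (diag0 Y) p)).
  by apply/UspP; exists Y; split=> // j k; apply: hook_mx_block.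
apply: eq_projblock => j eq_j; rewrite Tmap_lie_diag0 (bigD1 f) //= big1 ?addr0 => [|k neq_kf].
  by rewrite mxE eq_j -mu_f !eqxx /= zr_f -mulrA -rmorphM mulVf ?gt_eqF // rmorph1 mulr1.
have [zk0|zk_neq0] := eqVneq (zr k) 0; first by rewrite zk0 rmorph0 mulr0.
rewrite mxE (negbTE neq_kf) andbF /=; case: andP => [[/eqP eq_k _]|_]; last by rewrite mul0r.
by move: neq_kf; rewrite (z_block k zk_neq0) ?eqxx // eq_k mu_f.
Qed.

End Blocks.

Theorem proposition4p6 (R : rcfType) (n : nat)
  (lam : 'I_n.+1 -> R) (mu : 'I_n -> R) :
  (0 < n)%N ->
  (forall j : 'I_n,
     mu j <= lam (widen_ord (leqnSn n) j) /\ lam (lift ord0 j) <= mu j) ->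
  forall i : 'I_(mblocks mu),
    if isPshape lam mu (blockval mu i)
    then quot_iso_std (Vblock lam mu i) (Ublock lam mu i) (Lgrp lam mu i)
    else quot_trivial (Vblock lam mu i) (Ublock lam mu i).
Proof.
move=> _ interlacing i; case: ifP => [Pv | notPv].
  exists id; split=> // [y|w _]; first by exists y => //; apply: Pshape_Vblock_full.
  split=> [->|]; first exact: Ublock0.
  exact/(notMshape_Ublock_eq0 interlacing)/Pshape_notM.
case Mv: (isMshape lam mu (blockval mu i)) => w Vw.
  exact: Mshape_Vblock_sub_Ublock Vw.
rewrite (Wshape_Vblock_eq0 interlacing _ Vw); first exact: Ublock0.
by rewrite Wshape_notP_notM ?notPv ?Mv.
Qed.
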